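(* ($\mathbf{RCA_0}$) For any coded prae-dilator $T$, the linear order $\vartheta(T)$ is a Bachmann–Howard fixed point of $T$, i.e. there exists a Bachmann–Howard collapse $\vartheta:D^T_{\vartheta(T)}\to\vartheta(T)$.
   Context: Conventions. Each natural number $n$ is identified with the linear order $\{0,\dots,n-1\}$; the category of natural numbers has these as objects and strictly increasing maps as morphisms. For a finite linear order $a$ write $|a|$ for its cardinality and $\operatorname{en}_a:|a|\to a$ for the unique order isomorphism; for an order embedding $f:a\to b$ of finite linear orders, $|f|:|a|\to|b|$ is the unique strictly increasing map with $\operatorname{en}_b\circ|f|=f\circ\operatorname{en}_a$. For $c\subseteq d$, $\iota_c^d$ is the inclusion. $[X]^{<\omega}$ is the set of finite subsets of $X$, $[f]^{<\omega}(a)=\{f(s)\mid s\in a\}$. For a linear order $X$, $a\in[X]^{<\omega}$, $x\in X$: $a<^{\mathrm{fin}}_X x$ means $s<_Xx$ for all $s\in a$. A coded prae-dilator (represented by sets of natural numbers coding the orders $T_n$, the maps $T_f$ and the supports) consists of a functor $T$ from the category of natural numbers to linear orders with fields in $\mathbb N$, and a natural transformation $\operatorname{supp}^T:T\Rightarrow[\cdot]^{<\omega}$ ($\operatorname{supp}^T_m\circ T_f=[f]^{<\omega}\circ\operatorname{supp}^T_n$ for $f:n\to m$) such that every $\sigma\in T_n$ lies in the range of $T_{\iota\circ\operatorname{en}}$, with $\operatorname{en}=\operatorname{en}_{\operatorname{supp}^T_n(\sigma)}$ and $\iota$ the inclusion of $\operatorname{supp}^T_n(\sigma)$ into $n$.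 For a linear order $(X,<_X)$ with $X\subseteq\mathbb N$: $D^T_X=\{\langle a,\sigma\rangle\mid a\in[X]^{<\omega},\ \sigma\in T_{|a|},\ \operatorname{supp}^T_{|a|}(\sigma)=|a|\}$ ordered by $\langle a,\sigma\rangle<_{D^T_X}\langle b,\tau\rangle$ iff $T_{|\iota_a^{a\cup b}|}(\sigma)<_{T_{|a\cup b|}}T_{|\iota_b^{a\cup b}|}(\tau)$, with $\operatorname{supp}^{D^T}_X(\langle a,\sigma\rangle)=a$. A Bachmann–Howard collapse is a function $\vartheta:D^T_X\to X$ such that for all $\rho,\pi\in D^T_X$: (a) if $\rho<_{D^T_X}\pi$ and $\operatorname{supp}^{D^T}_X(\rho)<^{\mathrm{fin}}_X\vartheta(\pi)$ then $\vartheta(\rho)<_X\vartheta(\pi)$; (b) $\operatorname{supp}^{D^T}_X(\rho)<^{\mathrm{fin}}_X\vartheta(\rho)$. $X$ is then called a Bachmann–Howard fixed point of $T$. The order $\vartheta(T)$ (terms coded by natural numbers): defined by simultaneous recursion; whenever $s_0<_{\vartheta(T)}\dots<_{\vartheta(T)}s_{n-1}$ are in $\vartheta(T)$ ($n\geq0$) and $\sigma\in T_n$ with $\operatorname{supp}^T_n(\sigma)=n$, the term $\vartheta_\sigma^{s_0,\dots,s_{n-1}}$ is in $\vartheta(T)$. For $s=\vartheta_\sigma^{s_0,\dots,s_{n-1}}$, $t=\vartheta_\tau^{t_0,\dots,t_{m-1}}$: $s<_{\vartheta(T)}t$ iff (i') there are strictly increasing $f:n\to k$, $g:m\to k$, $k=|\{s_0,\dots,s_{n-1},t_0,\dots,t_{m-1}\}|$,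 with $f(i)<g(j)\Leftrightarrow s_i<_{\vartheta(T)}t_j$ and $g(j)<f(i)\Leftrightarrow t_j<_{\vartheta(T)}s_i$, such that $T_f(\sigma)<_{T_k}T_g(\tau)$, and moreover $n=0$ or $s_{n-1}<_{\vartheta(T)}t$; or (ii') $m>0$ and $s\leq_{\vartheta(T)}t_{m-1}$. *)

From mathcomp Require Import all_boot.
From Stdlib Require List.

Set Implicit Arguments.
Unset Strict Implicit.
Unset Printing Implicit Defensive.

(** * Morphisms of the category of natural numbers
    A strictly increasing map f : n -> m is represented by the list
    [:: f 0; ...; f (n-1)] of its values. *)
Definition hom (n m : nat) (f : seq nat) : Prop :=
  size f = n /\ sorted ltn f /\ all (fun i => i < m) f.

Definition comp_hom (g f : seq nat) : seq nat := map (nth 0 g) f.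
Definition id_hom (n : nat) : seq nat := iota 0 n.

(** * Data of a coded prae-dilator
    - [Tset n s]    : s \in T_n   (T_n has field in nat)
    - [Tlt n s t]   : s <_{T_n} t
    - [Tmor m f s]  : T_f(s), for f : size f -> m
    - [Tsupp n s]   : supp^T_n(s), a finite subset of n, given by its
                      strictly increasing enumeration (so en_{supp} is this list) *)
Record pd_data := PD {
  Tset  : nat -> nat -> Prop;
  Tlt   : nat -> nat -> nat -> Prop;
  Tmor  : nat -> seq nat -> nat -> nat;
  Tsupp : nat -> nat -> seq nat
}.

Definition prae_dilator (T : pd_data) : Prop :=
  (forall n s, Tset T n s -> ~ Tlt T n s s) /\
  (forall n s t u, Tset T n s -> Tset T n t -> Tset T n u ->
      Tlt T n s t -> Tlt T n t u -> Tlt T n s u) /\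
  (forall n s t, Tset T n s -> Tset T n t ->
      Tlt T n s t \/ s = t \/ Tlt T n t s) /\
  (forall n m f s, hom n m f -> Tset T n s -> Tset T m (Tmor T m f s)) /\
  (forall n m f s t, hom n m f -> Tset T n s -> Tset T n t ->
      Tlt T n s t -> Tlt T m (Tmor T m f s) (Tmor T m f t)) /\
  (forall n s, Tset T n s -> Tmor T n (id_hom n) s = s) /\
  (forall n m k f g s, hom n m f -> hom m k g -> Tset T n s ->
      Tmor T k (comp_hom g f) s = Tmor T k g (Tmor T m f s)) /\
  (forall n s, Tset T n s -> hom (size (Tsupp T n s)) n (Tsupp T n s)) /\
  (forall n m f s, hom n m f -> Tset T n s ->
      Tsupp T m (Tmor T m f s) = map (nth 0 f) (Tsupp T n s)) /\
  (* support condition: s is in the range of T_{iota o en} *)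
  (forall n s, Tset T n s ->
      exists s0, Tset T (size (Tsupp T n s)) s0 /\ Tmor T n (Tsupp T n s) s0 = s).

Fixpoint chain (A : Type) (r : A -> A -> Prop) (s : seq A) : Prop :=
  match s with
  | [::] => True
  | x :: s' => match s' with
               | [::] => True
               | y :: _ => r x y /\ chain r s'
               end
  end.

(** * The order D^T_X, for a linear order X given as a carrier predicate
      [inX] on a type A with strict order [ltX].
    An element <a, s> is represented by (a, s) where a is the strictly
    increasing enumeration of the finite set a. *)
Section D.
Variables (T : pd_data) (A : Type) (inX : A -> Prop) (ltX : A -> A -> Prop).

Definition Dmem (p : seq A * nat) : Prop :=
  (forall x, List.In x p.1 -> inX x) /\ chain ltX p.1 /\
  Tset T (size p.1) p.2 /\ Tsupp T (size p.1) p.2 = iota 0 (size p.1).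

(** f = |iota_a^c| : en_c o f = en_a *)
Definition enum_emb (f : seq nat) (a c : seq A) : Prop :=
  size f = size a /\
  forall i, i < size a -> List.nth_error c (nth 0 f i) = List.nth_error a i.

(** <a,s> <_{D^T_X} <b,t>; c is the increasing enumeration of a \cup b *)
Definition Dlt (p q : seq A * nat) : Prop :=
  exists (c : seq A) (fa fb : seq nat),
    chain ltX c /\ (forall x, List.In x c <-> List.In x p.1 \/ List.In x q.1) /\
    enum_emb fa p.1 c /\ enum_emb fb q.1 c /\
    Tlt T (size c) (Tmor T (size c) fa p.2) (Tmor T (size c) fb q.2).

Definition fin_below (a : seq A) (x : A) : Prop :=
  forall y, List.In y a -> ltX y x.

(** supp^{D^T}_X(<a,s>) = a *)
Definition BH_collapse (theta : seq A * nat -> A) : Prop :=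
  (forall r, Dmem r -> inX (theta r)) /\
  (forall r p, Dmem r -> Dmem p ->
     (Dlt r p -> fin_below r.1 (theta p) -> ltX (theta r) (theta p)) /\
     fin_below r.1 (theta r)).

Definition strict_linear : Prop :=
  (forall x, inX x -> ~ ltX x x) /\
  (forall x y z, inX x -> inX y -> inX z -> ltX x y -> ltX y z -> ltX x z) /\
  (forall x y, inX x -> inX y -> ltX x y \/ x = y \/ ltX y x).

Definition BH_fixed_point : Prop :=
  strict_linear /\ exists theta, BH_collapse theta.
End D.

Inductive term : Type := Th : nat -> seq term -> term.

Fixpoint tsize (t : term) : nat :=
  match t with Th _ ss => (sumn (map tsize ss)).+1 end.

(** comparison with fuel; the recursion of the paper is on the sum of the
    sizes of the compared terms, realised by [th_ltT] below. *)
Fixpoint th_lt (T : pd_data) (k : nat) (s t : term) {struct k} : Prop :=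
  match k with
  | 0 => False
  | k'.+1 =>
    match s, t with
    | Th sg ss, Th tu ts =>
      let n := size ss in
      let m := size ts in
      (* (i') *)
      (exists (c : seq term) (f g : seq nat),
         List.NoDup c /\ (forall x, List.In x c <-> List.In x ss \/ List.In x ts) /\
         hom n (size c) f /\ hom m (size c) g /\
         (forall i j, i < n -> j < m ->
            (nth 0 f i < nth 0 g j <-> th_lt T k' (nth s ss i) (nth s ts j)) /\
            (nth 0 g j < nth 0 f i <-> th_lt T k' (nth s ts j) (nth s ss i))) /\
         Tlt T (size c) (Tmor T (size c) f sg) (Tmor T (size c) g tu) /\
         (n = 0 \/ th_lt T k' (last s ss) t))
      \/
      (* (ii') *)
      (0 < m /\ (s = last s ts \/ th_lt T k' s (last s ts)))
    end
  end.

Definition th_ltT (T : pd_data) (s t : term) : Prop :=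
  th_lt T (tsize s + tsize t) s t.

Fixpoint th_wf (T : pd_data) (t : term) : Prop :=
  match t with
  | Th sg ss =>
    foldr and True (map (th_wf T) ss) /\ chain (th_ltT T) ss /\
    Tset T (size ss) sg /\ Tsupp T (size ss) sg = iota 0 (size ss)
  end.

(* The collapse sends <a, sigma> to the term theta_sigma^a.  Condition (b) is clause (ii'):
   every argument of a term lies below it.  Condition (a) is clause (i'), whose witnesses are
   exactly what a comparison in D^T provides.  The substance is that <_theta(T) is a linear order.
   The witnesses c, f, g of clause (i') are unique (f and g must list the ranks of the arguments
   in c), so clause (i') is the comparison of <ss, sigma> and <ts, tau> in D^T_X; by functoriality
   of T it may be computed in any finite superset of ss and ts, and then D^T_X is linear whenever
   X is.  Linearity of the term order follows by induction on a bound N for the size of terms: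
   once terms of size <= N are linearly ordered, so are their argument lists in D^T, and an inner
   induction on sizes gives irreflexivity, transitivity and trichotomy for terms of size <= N+1. *)

From Pilot Require Import Defs.
From HB Require Import structures.
From mathcomp Require Import all_boot zify boolp.
From Stdlib Require List.

Set Implicit Arguments.
Unset Strict Implicit.
Unset Printing Implicit Defensive.

Local Notation tsize := Defs.tsize.

Lemma InP (A : eqType) (x : A) (s : seq A) : reflect (List.In x s) (x \in s).
Proof.
elim: s => [|y s IH]; first by constructor.
rewrite in_cons; apply: (iffP orP) => -[H|H] /=.
- by left; rewrite (eqP H).
- by right; apply/IH.
- by left; rewrite H.
- by right; apply/IH.
Qed.

Lemma NoDupP (A : eqType) (s : seq A) : reflect (List.NoDup s) (uniq s).
Proof.
elim: s => [|y s IH]; first by do 2 constructor.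
rewrite cons_uniq; apply: (iffP andP) => [[/InP ys /IH Ds]|/List.NoDup_cons_iff [ys /IH Ds]].
- by constructor.
- by split=> //; apply/InP.
Qed.

Lemma In_union_mem_cat (A : eqType) (c ss ts : seq A) :
  (forall x, List.In x c <-> List.In x ss \/ List.In x ts) <-> c =i ss ++ ts.
Proof.
split=> E x.
  rewrite mem_cat; apply/InP/orP => [/E [] /InP|xsts]; [by left|by right|apply/E].
  by case: xsts => /InP; auto.
split=> [/InP|xsts]; first by rewrite E mem_cat => /orP [] /InP; auto.
by apply/InP; rewrite E mem_cat; case: xsts => /InP ->; rewrite ?orbT.
Qed.

Lemma nth_errorE (B : Type) (d : B) (s : seq B) i :
  List.nth_error s i = if i < size s then Some (nth d s i) else None.
Proof. by elim: s i => [|x s IH] []. Qed.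

Lemma enum_emb_nth (B : Type) (d : B) (h : seq nat) (a c : seq B) i :
  enum_emb h a c -> i < size a -> nth 0 h i < size c /\ nth d c (nth 0 h i) = nth d a i.
Proof.
case=> _ h_a i_lt; move: (h_a i i_lt); rewrite !(nth_errorE d) i_lt.
by case: ifP => // hi_lt [].
Qed.

Lemma foldr_and_map (B : Type) (Q : B -> Prop) (s : seq B) :
  foldr and True (map Q s) <-> (forall x, List.In x s -> Q x).
Proof.
elim: s => [|y s IH] //=; rewrite IH.
by split=> [[Qy Qs] x [<-|/Qs]|Q_ys] //; split=> [|x sx]; apply: Q_ys; [left|right].
Qed.

Lemma chainP {B : Type} {R : B -> B -> Prop} {s : seq B} (x0 : B) :
  chain R s <-> forall i, i.+1 < size s -> R (nth x0 s i) (nth x0 s i.+1).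
Proof.
elim: s => [|x s IH] //; case: s IH => [|y s] IH //.
rewrite -[chain R (x :: y :: s)]/(R x y /\ chain R (y :: s)) IH /=.
split=> [[Rxy Rs] [|i] //= /Rs //|Rs].
by split=> [|i /(Rs i.+1)]; first exact: (Rs 0).
Qed.

Lemma homP n m f : hom n m f <->
  [/\ size f = n, {in gtn n &, forall i j, i < j -> nth 0 f i < nth 0 f j}
    & {in gtn n, forall i, nth 0 f i < m}].
Proof.
split=> [[<- [f_sorted f_le]]|[<- f_mono f_le]].
  split=> // [i j i_lt j_lt i_lt_j|i i_lt].
    by apply: (sorted_ltn_nth ltn_trans 0 f_sorted).
  by move/allP: f_le; apply; apply: mem_nth.
split=> //; split.
  by apply/(sortedP 0) => i i_lt; apply: f_mono; rewrite // inE ltnW.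
by apply/allP=> _ /(nthP 0) [i i_lt <-]; apply: f_le.
Qed.

Fixpoint term_to_tree (t : term) : GenTree.tree nat :=
  let: Th sg ss := t in GenTree.Node sg (map term_to_tree ss).

Fixpoint tree_to_term (x : GenTree.tree nat) : term :=
  match x with
  | GenTree.Leaf _ => Th 0 [::]
  | GenTree.Node sg xs => Th sg (map tree_to_term xs)
  end.

Lemma term_to_treeK : cancel term_to_tree tree_to_term.
Proof.
rewrite /cancel; fix IH 1 => -[sg ss] /=; congr Th; rewrite -map_comp.
by elim: ss => [|s ss IHss] //=; rewrite IH IHss.
Qed.

HB.instance Definition _ := Countable.copy term (can_type term_to_treeK).

Lemma tsize_gt0 t : 0 < tsize t.
Proof. by case: t. Qed.

Lemma tsize_arg sg ss x : x \in ss -> tsize x < tsize (Th sg ss).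
Proof.
rewrite /= ltnS; elim: ss => [|y ss IH] //=; rewrite in_cons.
by case/orP=> [/eqP ->|/IH x_le]; [apply: leq_addr|apply: leq_trans x_le (leq_addl _ _)].
Qed.

Lemma last_in (B : eqType) (d : B) s : 0 < size s -> last d s \in s.
Proof. by case: s => // x s _; rewrite [last _ _]/= mem_last. Qed.

Lemma last_dflt (B : Type) (d d' : B) s : 0 < size s -> last d s = last d' s.
Proof. by case: s. Qed.

Section Unfolding.
Variable T : pd_data.

Definition th_step (R : term -> term -> Prop) (s t : term) : Prop :=
  match s, t with
  | Th sg ss, Th tu ts =>
    let n := size ss in
    let m := size ts in
    (exists (c : seq term) (f g : seq nat),
       List.NoDup c /\ (forall x, List.In x c <-> List.In x ss \/ List.In x ts) /\
       hom n (size c) f /\ hom m (size c) g /\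
       (forall i j, i < n -> j < m ->
          (nth 0 f i < nth 0 g j <-> R (nth s ss i) (nth s ts j)) /\
          (nth 0 g j < nth 0 f i <-> R (nth s ts j) (nth s ss i))) /\
       Tlt T (size c) (Tmor T (size c) f sg) (Tmor T (size c) g tu) /\
       (n = 0 \/ R (last s ss) t))
    \/
    (0 < m /\ (s = last s ts \/ R s (last s ts)))
  end.

Lemma th_lt_S k s t : th_lt T k.+1 s t = th_step (th_lt T k) s t.
Proof. by []. Qed.

Lemma th_step_ext (R R' : term -> term -> Prop) s t :
  (forall x y, tsize x + tsize y < tsize s + tsize t -> (R x y <-> R' x y)) ->
  (th_step R s t <-> th_step R' s t).
Proof.
have last_lt (xs : seq term) x0 n : 0 < size xs -> tsize (last x0 xs) < tsize (Th n xs).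
  by move=> /(last_in x0); apply: tsize_arg.
suff step_sub (Q Q' : term -> term -> Prop) :
    (forall x y, tsize x + tsize y < tsize s + tsize t -> (Q x y <-> Q' x y)) ->
    th_step Q s t -> th_step Q' s t.
  by move=> RR'; split; apply: step_sub => x y /RR' ?; last apply: iff_sym.
case: s t => [sg ss] [tu ts] QQ'.
have ss_lt i : i < size ss -> tsize (nth (Th sg ss) ss i) < tsize (Th sg ss).
  by move=> i_lt; apply/tsize_arg/mem_nth.
have ts_lt j : j < size ts -> tsize (nth (Th sg ss) ts j) < tsize (Th tu ts).
  by move=> j_lt; apply/tsize_arg/mem_nth.
case=> [[c [f [g [Dc [Ec [Hf [Hg [Efg [Tfg Hlast]]]]]]]]]|[ts_gt0 Hlast]].
- left; exists c, f, g; do 4 split=> //; split; last split=> //.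
  + move=> i j i_lt j_lt; move: (ss_lt i i_lt) (ts_lt j j_lt) => lt_i lt_j.
    by rewrite -!QQ'; [apply: Efg|lia..].
  + have [->|ss_gt0] := posnP (size ss); [by left|right].
    case: Hlast => [ss0|]; first by rewrite ss0 in ss_gt0.
    by move=> Hl; rewrite -QQ' // ltn_add2r; apply: last_lt.
- right; split=> //; case: Hlast => [|Hl]; [by left|right].
  by rewrite -QQ' // ltn_add2l; apply: last_lt.
Qed.

Lemma th_lt_fuel k1 k2 s t : tsize s + tsize t <= k1 -> tsize s + tsize t <= k2 ->
  (th_lt T k1 s t <-> th_lt T k2 s t).
Proof.
have := tsize_gt0 s; elim: k1 k2 s t => [|k1 IH] [|k2] s t s_gt0 k1_ge k2_ge; try lia.
rewrite !th_lt_S; apply: th_step_ext => x y xy_lt.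
by apply: IH; [exact: tsize_gt0|lia..].
Qed.

Lemma th_ltT_unfold s t : th_ltT T s t <-> th_step (th_ltT T) s t.
Proof.
rewrite /th_ltT; have := tsize_gt0 s.
case E: (tsize s + tsize t) => [|k] s_gt0; first lia.
by rewrite th_lt_S; apply: th_step_ext => x y; rewrite E => xy_lt; apply: th_lt_fuel.
Qed.
End Unfolding.

Lemma perm_map_iota (A : eqType) (V : seq A) (phi : A -> nat) :
  uniq V -> {in V &, injective phi} -> {in V, forall x, phi x < size V} ->
  perm_eq (map phi V) (iota 0 (size V)).
Proof.
move=> V_uniq phi_inj phi_lt; have phiV_uniq : uniq (map phi V) by rewrite map_inj_in_uniq.
apply: uniq_perm; rewrite ?iota_uniq //.
have sub_iota : {subset map phi V <= iota 0 (size V)}.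
  by move=> _ /mapP [x xV ->]; rewrite mem_iota phi_lt.
by have [] := uniq_min_size phiV_uniq sub_iota; rewrite size_map size_iota.
Qed.

(* The witnesses of clause (i') of the term order. *)
Definition joint_emb (A : Type) (r : A -> A -> Prop) (d : A) (ss ts c : seq A)
    (f g : seq nat) :=
  [/\ List.NoDup c, (forall x, List.In x c <-> List.In x ss \/ List.In x ts),
      hom (size ss) (size c) f, hom (size ts) (size c) g &
      forall i j, i < size ss -> j < size ts ->
        (nth 0 f i < nth 0 g j <-> r (nth d ss i) (nth d ts j)) /\
        (nth 0 g j < nth 0 f i <-> r (nth d ts j) (nth d ss i))].

Section Rank.
Variables (A : eqType) (P : A -> Prop) (r : A -> A -> Prop).
Hypothesis r_lin : strict_linear P r.

Lemma slin_irr x : P x -> ~ r x x.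
Proof. by case: r_lin => irr _; apply: irr. Qed.

Lemma slin_trans x y z : P x -> P y -> P z -> r x y -> r y z -> r x z.
Proof. by case: r_lin => _ [trans _]; apply: trans. Qed.

Lemma slin_total x y : P x -> P y -> r x y \/ x = y \/ r y x.
Proof. by case: r_lin => _ [_ total]; apply: total. Qed.

Lemma slin_asym x y : P x -> P y -> r x y -> ~ r y x.
Proof. by move=> Px Py rxy /(slin_trans Px Py Px rxy); apply: slin_irr. Qed.

Definition rank (V : seq A) (x : A) : nat := count (fun y => `[< r y x >]) V.

Section InV.
Variable V : seq A.
Hypothesis PV : {in V, forall x, P x}.

Lemma rank_lt_size x : x \in V -> rank V x < size V.
Proof.
move=> xV; rewrite /rank -(count_predC (fun y => `[< r y x >])) -[X in X < _]addn0 ltn_add2l.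
by rewrite -has_count; apply/hasP; exists x => //=; apply/asboolPn/slin_irr/PV.
Qed.

Lemma rank_lt x y : x \in V -> y \in V -> r x y -> rank V x < rank V y.
Proof.
move=> xV yV rxy; rewrite {2}/rank -size_filter -(count_predC (fun z => `[< r z x >])).
rewrite !count_filter -[X in X < _]addn0.
have -> : count (predI (fun z => `[< r z x >]) (fun z => `[< r z y >])) V = rank V x.
  apply: eq_in_count => z zV /=; case: (asboolP (r z x)) => // rzx.
  by apply/asboolP; apply: slin_trans rzx rxy; apply: PV.
rewrite ltn_add2l -has_count; apply/hasP; exists x => //=.
by rewrite (asboolT rxy) andbT; apply/asboolPn/slin_irr/PV.
Qed.

Lemma rank_ltP x y : x \in V -> y \in V -> (rank V x < rank V y <-> r x y).
Proof.
move=> xV yV; split=> [|/(rank_lt xV yV) //].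
have [//|[->|/(rank_lt yV xV)]] := slin_total (PV xV) (PV yV); first by rewrite ltnn.
by move=> lt_yx lt_xy; have := ltn_trans lt_xy lt_yx; rewrite ltnn.
Qed.

Lemma rank_inj : {in V &, injective (rank V)}.
Proof.
move=> x y xV yV Exy; have [|[//|]] := slin_total (PV xV) (PV yV).
  by move/(rank_ltP xV yV); rewrite Exy ltnn.
by move/(rank_ltP yV xV); rewrite Exy ltnn.
Qed.

Lemma rank_eq_mono (phi : A -> nat) : uniq V ->
  {in V &, forall x y, r x y -> phi x < phi y} -> {in V, forall x, phi x < size V} ->
  {in V, rank V =1 phi}.
Proof.
move=> V_uniq phi_mono phi_lt.
have phi_ltP x y : x \in V -> y \in V -> (phi x < phi y <-> r x y).
  move=> xV yV; split=> [|/phi_mono]; last exact.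
  have [//|[->|/(phi_mono _ _ yV xV) lt_yx lt_xy]] := slin_total (PV xV) (PV yV).
    by rewrite ltnn.
  by have := ltn_trans lt_xy lt_yx; rewrite ltnn.
have phi_inj : {in V &, injective phi}.
  move=> x y xV yV Exy; have [|[//|]] := slin_total (PV xV) (PV yV).
    by move/(phi_ltP _ _ xV yV); rewrite Exy ltnn.
  by move/(phi_ltP _ _ yV xV); rewrite Exy ltnn.
move=> x xV; rewrite /rank (eq_in_count (a2 := fun y => phi y < phi x)); last first.
  by move=> y yV; apply/asboolP/idP => /(phi_ltP _ _ yV xV).
rewrite -(count_map phi (fun p => p < phi x)) (permP (perm_map_iota V_uniq phi_inj phi_lt)).
by rewrite -size_filter (filter_iota_ltn 0) ?size_iota // ltnW ?phi_lt.
Qed.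

End InV.

Section Chains.
Variable s : seq A.
Hypotheses (Ps : {in s, forall x, P x}) (s_chain : chain r s).

Lemma chain_nth_lt x0 i j : i < j -> j < size s -> r (nth x0 s i) (nth x0 s j).
Proof.
move: s_chain => /(chainP x0) s_step; elim: j => // j IH.
rewrite ltnS leq_eqVlt => /orP [/eqP <-|ij] j_lt; first exact: s_step.
by apply: (slin_trans _ _ _ (IH ij (ltnW j_lt)) (s_step _ j_lt)); apply/Ps/mem_nth; lia.
Qed.

Lemma chain_nth_ltP x0 i j : i < size s -> j < size s ->
  (i < j <-> r (nth x0 s i) (nth x0 s j)).
Proof.
move=> i_lt j_lt; split=> [/chain_nth_lt|]; first exact.
have [//|ji|<-] := ltngtP i j; last by move/slin_irr; case; apply/Ps/mem_nth.
by move/slin_asym; case; [apply/Ps/mem_nth..|apply: chain_nth_lt].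
Qed.

Lemma chain_uniq : uniq s.
Proof.
case E: s => [//|x0 s0]; rewrite -E; apply/(uniqP x0) => i j i_lt j_lt Eij.
have [ij|ji|//] := ltngtP i j; [move: (chain_nth_lt x0 ij j_lt)|move: (chain_nth_lt x0 ji i_lt)];
  by rewrite Eij => rjj; case: (slin_irr (Ps (mem_nth x0 j_lt)) rjj).
Qed.

Lemma chain_last x0 x : x \in s -> x = last x0 s \/ r x (last x0 s).
Proof.
move=> xs; have s_gt0 : 0 < size s by case: (s) xs.
rewrite -(nth_index x0 xs) -nth_last; have := index_mem x s; rewrite xs.
case: (ltngtP (index x s) (size s).-1) => [lt_last|//|->]; [right|lia|by left].
by apply: chain_nth_lt; lia.
Qed.

End Chains.

Lemma hom_rank V xs : {in V, forall x, P x} -> chain r xs -> {subset xs <= V} ->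
  hom (size xs) (size V) (map (rank V) xs).
Proof.
move=> PV xs_chain xsV; have Pxs : {in xs, forall x, P x} by move=> x /xsV /PV.
apply/homP; rewrite size_map; split=> // [i j i_lt j_lt ij|i i_lt];
  have [x0 _] : exists x0 : A, True by case: (xs) i_lt => // x0; exists x0.
- rewrite !(nth_map x0) //; apply: (rank_lt PV); try exact/xsV/mem_nth.
  exact: chain_nth_lt.
- by rewrite (nth_map x0) //; apply/(rank_lt_size PV)/xsV/mem_nth.
Qed.

Lemma rank_subset_hom U V : uniq U -> {in V, forall x, P x} -> {subset U <= V} ->
  exists2 e, hom (size U) (size V) e & {in U, forall x, nth 0 e (rank U x) = rank V x}.
Proof.
case: U => [|x0 U0] U_uniq PV UV; first by exists [::].
set U := x0 :: U0 in U_uniq UV *.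
have PU : {in U, forall x, P x} by move=> x /UV /PV.
have rankU_iota : perm_eq (map (rank U) U) (iota 0 (size U)).
  by apply: perm_map_iota => // [x y|x]; [apply: rank_inj|apply: rank_lt_size].
pose unrank p := nth x0 U (index p (map (rank U) U)).
have unrankK p : p < size U -> unrank p \in U /\ rank U (unrank p) = p.
  move=> p_lt; have pU : p \in map (rank U) U by rewrite (perm_mem rankU_iota) mem_iota.
  have idx_lt : index p (map (rank U) U) < size U by rewrite -(size_map (rank U)) index_mem.
  by rewrite /unrank mem_nth // -(nth_map x0 0) ?nth_index.
exists [seq rank V (unrank p) | p <- iota 0 (size U)].
  apply/homP; rewrite size_map size_iota; split=> // [i j i_lt j_lt ij|i i_lt].
    rewrite !(nth_map 0) ?size_iota // !nth_iota // !add0n.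
    have [iU rank_i] := unrankK i i_lt; have [jU rank_j] := unrankK j j_lt.
    by apply/(rank_ltP PV); [apply: UV..|apply/(rank_ltP PU) => //; rewrite rank_i rank_j].
  rewrite (nth_map 0) ?size_iota // nth_iota // add0n.
  by apply: (rank_lt_size PV); apply/UV/(unrankK i i_lt).1.
move=> x xU; have x_lt := rank_lt_size PU xU.
rewrite (nth_map 0) ?size_iota // nth_iota // add0n; congr (rank V _).
by have [uU /(rank_inj PU uU xU)] := unrankK _ x_lt.
Qed.

Section JointEmbedding.
Variables (d : A) (ss ts : seq A).
Hypotheses (Pss : {in ss, forall x, P x}) (Pts : {in ts, forall x, P x}).
Hypotheses (ss_chain : chain r ss) (ts_chain : chain r ts).

Lemma joint_emb_ranks c f g : joint_emb r d ss ts c f g ->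
  f = map (rank c) ss /\ g = map (rank c) ts.
Proof.
move=> [/NoDupP c_uniq /In_union_mem_cat c_mem f_hom g_hom fg_cmp].
move/homP: f_hom => [f_size f_mono f_lt]; move/homP: g_hom => [g_size g_mono g_lt].
have Pc : {in c, forall x, P x} by move=> x; rewrite c_mem mem_cat => /orP [/Pss|/Pts].
have [ss_uniq ts_uniq] := (chain_uniq Pss ss_chain, chain_uniq Pts ts_chain).
pose phi x := if x \in ss then nth 0 f (index x ss) else nth 0 g (index x ts).
have phi_ss i : i < size ss -> phi (nth d ss i) = nth 0 f i.
  by move=> i_lt; rewrite /phi mem_nth // index_uniq.
have phi_ts j : j < size ts -> phi (nth d ts j) = nth 0 g j.
  move=> j_lt; rewrite /phi; case: ifPn => [tj_ss|_]; last by rewrite index_uniq.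
  have i_lt : index (nth d ts j) ss < size ss by rewrite index_mem.
  have [fg gf] := fg_cmp _ _ i_lt j_lt; rewrite nth_index // in fg gf.
  have tj_irr := slin_irr (Pts (mem_nth d j_lt)).
  by case: (ltngtP (nth 0 f (index (nth d ts j) ss)) (nth 0 g j)) => [/fg|/gf|] // /tj_irr.
have c_nth x : x \in c ->
    (exists2 i, i < size ss & x = nth d ss i) \/ (exists2 j, j < size ts & x = nth d ts j).
  rewrite c_mem mem_cat => /orP [xs|xt]; [left; exists (index x ss)|right; exists (index x ts)];
    by rewrite ?index_mem ?nth_index.
have phi_mono : {in c &, forall x y, r x y -> phi x < phi y}.
  move=> x y /c_nth [[i i_lt ->]|[i i_lt ->]] /c_nth [[j j_lt ->]|[j j_lt ->]];
    rewrite ?phi_ss ?phi_ts //.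
  - by move/(chain_nth_ltP Pss ss_chain d i_lt j_lt); apply: f_mono.
  - by move/(fg_cmp i j i_lt j_lt).1.
  - by move/(fg_cmp j i j_lt i_lt).2.
  - by move/(chain_nth_ltP Pts ts_chain d i_lt j_lt); apply: g_mono.
have phi_lt : {in c, forall x, phi x < size c}.
  move=> x /c_nth [[i i_lt ->]|[j j_lt ->]]; first by rewrite phi_ss //; apply: f_lt.
  by rewrite phi_ts //; apply: g_lt.
have rank_phi := rank_eq_mono Pc c_uniq phi_mono phi_lt.
split; apply: (eq_from_nth (x0 := 0)); rewrite ?size_map // ?f_size ?g_size => i i_lt.
  by rewrite (nth_map d) // rank_phi ?phi_ss // c_mem mem_cat mem_nth.
by rewrite (nth_map d) // rank_phi ?phi_ts // c_mem mem_cat mem_nth ?orbT.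
Qed.

Lemma joint_emb_undup (c := undup (ss ++ ts)) :
  joint_emb r d ss ts c (map (rank c) ss) (map (rank c) ts).
Proof.
have c_mem : c =i ss ++ ts by apply: mem_undup.
have Pc : {in c, forall x, P x} by move=> x; rewrite c_mem mem_cat => /orP [/Pss|/Pts].
have [ss_c ts_c] : {subset ss <= c} /\ {subset ts <= c}.
  by split=> x xs; rewrite c_mem mem_cat xs ?orbT.
split; first exact/NoDupP/undup_uniq.
- exact/In_union_mem_cat.
- exact: hom_rank.
- exact: hom_rank.
move=> i j i_lt j_lt; rewrite !(nth_map d) //.
have [si_c tj_c] : nth d ss i \in c /\ nth d ts j \in c.
  by split; [apply/ss_c/mem_nth|apply/ts_c/mem_nth].
by split; apply: rank_ltP.
Qed.

End JointEmbedding.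

End Rank.

Section PraeDilator.
Variable T : pd_data.
Hypothesis T_pd : prae_dilator T.

Lemma Tlt_irr n s : Tset T n s -> ~ Tlt T n s s.
Proof. by case: T_pd => irr _; apply: irr. Qed.

Lemma Tlt_trans n s t u : Tset T n s -> Tset T n t -> Tset T n u ->
  Tlt T n s t -> Tlt T n t u -> Tlt T n s u.
Proof. by case: T_pd => _ [trans _]; apply: trans. Qed.

Lemma Tlt_total n s t : Tset T n s -> Tset T n t -> Tlt T n s t \/ s = t \/ Tlt T n t s.
Proof. by case: T_pd => _ [_ [total _]]; apply: total. Qed.

Lemma Tmor_set n m f s : hom n m f -> Tset T n s -> Tset T m (Tmor T m f s).
Proof. by case: T_pd => _ [_ [_ [set _]]]; apply: set. Qed.

Lemma Tmor_lt n m f s t : hom n m f -> Tset T n s -> Tset T n t ->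
  Tlt T n s t -> Tlt T m (Tmor T m f s) (Tmor T m f t).
Proof. by case: T_pd => _ [_ [_ [_ [mono _]]]]; apply: mono. Qed.

Lemma Tmor_comp n m k f g s : hom n m f -> hom m k g -> Tset T n s ->
  Tmor T k (comp_hom g f) s = Tmor T k g (Tmor T m f s).
Proof. by case: T_pd => _ [_ [_ [_ [_ [_ [comp _]]]]]]; apply: comp. Qed.

Lemma Tsupp_mor n m f s : hom n m f -> Tset T n s ->
  Tsupp T m (Tmor T m f s) = map (nth 0 f) (Tsupp T n s).
Proof. by case: T_pd => _ [_ [_ [_ [_ [_ [_ [_ [nat _]]]]]]]]; apply: nat. Qed.

Lemma Tlt_asym n s t : Tset T n s -> Tset T n t -> Tlt T n s t -> ~ Tlt T n t s.
Proof. by move=> Ts Tt st /(Tlt_trans Ts Tt Ts st); apply: Tlt_irr. Qed.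

Lemma Tmor_ltP n m f s t : hom n m f -> Tset T n s -> Tset T n t ->
  (Tlt T m (Tmor T m f s) (Tmor T m f t) <-> Tlt T n s t).
Proof.
move=> f_hom Ts Tt; split=> [|/(Tmor_lt f_hom Ts Tt)] //.
have [//|[<-|/(Tmor_lt f_hom Tt Ts)]] := Tlt_total Ts Tt.
  by move/(Tlt_irr (Tmor_set f_hom Ts)).
by move=> ts st; case: (Tlt_asym (Tmor_set f_hom Ts) (Tmor_set f_hom Tt) st ts).
Qed.

Lemma Tmor_inj n m f s t : hom n m f -> Tset T n s -> Tset T n t ->
  Tmor T m f s = Tmor T m f t -> s = t.
Proof.
move=> f_hom Ts Tt Est; have irr := Tlt_irr (Tmor_set f_hom Tt).
have [/(Tmor_lt f_hom Ts Tt)|[//|/(Tmor_lt f_hom Tt Ts)]] := Tlt_total Ts Tt;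
  by rewrite Est => /irr.
Qed.

Lemma Tlt_comp_hom n m k K f g e s t : hom n k f -> hom m k g -> hom k K e ->
  Tset T n s -> Tset T m t ->
  (Tlt T K (Tmor T K (comp_hom e f) s) (Tmor T K (comp_hom e g) t) <->
   Tlt T k (Tmor T k f s) (Tmor T k g t)).
Proof.
move=> f_hom g_hom e_hom Ts Tt; rewrite (Tmor_comp f_hom e_hom Ts) (Tmor_comp g_hom e_hom Tt).
by apply: (Tmor_ltP e_hom); [apply: Tmor_set f_hom Ts|apply: Tmor_set g_hom Tt].
Qed.

End PraeDilator.

(* For [a] a chain and [c] duplicate-free, [map (rank r c) a] is the paper's |iota_a^c|. *)
Definition dlt (T : pd_data) (A : eqType) (r : A -> A -> Prop) (p q : seq A * nat) : Prop :=
  let c := undup (p.1 ++ q.1) in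
  Tlt T (size c) (Tmor T (size c) (map (rank r c) p.1) p.2)
                 (Tmor T (size c) (map (rank r c) q.1) q.2).

Section DOrder.
Variables (T : pd_data) (A : eqType) (P : A -> Prop) (r : A -> A -> Prop).
Hypotheses (T_pd : prae_dilator T) (r_lin : strict_linear P r).

Local Notation D := (Dmem T P r).

Lemma DmemE p : D p <->
  [/\ {in p.1, forall x, P x}, chain r p.1, Tset T (size p.1) p.2
    & Tsupp T (size p.1) p.2 = iota 0 (size p.1)].
Proof.
split=> [[Pp [p_chain [Tp supp_p]]]|[Pp p_chain Tp supp_p]].
  by split=> // x /InP; apply: Pp.
by split=> // x /InP; apply: Pp.
Qed.

Section Superset.
Variable V : seq A.
Hypothesis PV : {in V, forall x, P x}.

Lemma Tmor_rank_set p : D p -> {subset p.1 <= V} ->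
  Tset T (size V) (Tmor T (size V) (map (rank r V) p.1) p.2).
Proof. by case/DmemE=> _ p_chain Tp _ pV; apply: Tmor_set (hom_rank r_lin PV p_chain pV) Tp. Qed.

Lemma dlt_superset p q : D p -> D q -> {subset p.1 ++ q.1 <= V} ->
  (dlt T r p q <->
   Tlt T (size V) (Tmor T (size V) (map (rank r V) p.1) p.2)
                  (Tmor T (size V) (map (rank r V) q.1) q.2)).
Proof.
move=> /DmemE [_ p_chain Tp _] /DmemE [_ q_chain Tq _] pqV; rewrite /dlt.
set c := undup _; have c_V : {subset c <= V} by move=> x; rewrite mem_undup => /pqV.
have Pc : {in c, forall x, P x} by move=> x /c_V /PV.
have [p_c q_c] : {subset p.1 <= c} /\ {subset q.1 <= c}.
  by split=> x xs; rewrite mem_undup mem_cat xs ?orbT.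
have [e e_hom e_rank] := rank_subset_hom r_lin (undup_uniq _) PV c_V.
have comp_rank xs : {subset xs <= c} -> comp_hom e (map (rank r c) xs) = map (rank r V) xs.
  by move=> xs_c; rewrite /comp_hom -map_comp; apply/eq_in_map => x /xs_c /e_rank.
have [p_hom q_hom] := (hom_rank r_lin Pc p_chain p_c, hom_rank r_lin Pc q_chain q_c).
by rewrite -(Tlt_comp_hom T_pd p_hom q_hom e_hom Tp Tq) !comp_rank.
Qed.

End Superset.

Lemma dlt_irr p : D p -> ~ dlt T r p p.
Proof.
move=> Dp; case/DmemE: (Dp) => Pp _ _ _.
have pp_p : {subset p.1 ++ p.1 <= p.1} by move=> x; rewrite mem_cat orbb.
by rewrite (dlt_superset Pp Dp Dp pp_p); apply/(Tlt_irr T_pd)/(Tmor_rank_set Pp).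
Qed.

Lemma dlt_trans p q u : D p -> D q -> D u -> dlt T r p q -> dlt T r q u -> dlt T r p u.
Proof.
move=> Dp Dq Du; set V := undup (p.1 ++ q.1 ++ u.1).
case/DmemE: (Dp) => Pp _ _ _; case/DmemE: (Dq) => Pq _ _ _; case/DmemE: (Du) => Pu _ _ _.
have PV : {in V, forall x, P x}.
  by move=> x; rewrite mem_undup !mem_cat => /or3P [/Pp|/Pq|/Pu].
have sub xs ys : {subset xs <= V} -> {subset ys <= V} -> {subset xs ++ ys <= V}.
  by move=> xsV ysV x; rewrite mem_cat => /orP [/xsV|/ysV].
have [pV qV uV] : [/\ {subset p.1 <= V}, {subset q.1 <= V} & {subset u.1 <= V}].
  by split=> x xs; rewrite mem_undup !mem_cat xs ?orbT.
rewrite !(dlt_superset PV) //; try exact: sub.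
by apply: (Tlt_trans T_pd); apply: Tmor_rank_set.
Qed.

Lemma dlt_total p q : D p -> D q -> dlt T r p q \/ p = q \/ dlt T r q p.
Proof.
move=> Dp Dq; case/DmemE: (Dp) => Pp p_chain Tp supp_p; case/DmemE: (Dq) => Pq q_chain Tq supp_q.
set V := undup (p.1 ++ q.1).
have PV : {in V, forall x, P x} by move=> x; rewrite mem_undup mem_cat => /orP [/Pp|/Pq].
have [pV qV] : {subset p.1 <= V} /\ {subset q.1 <= V}.
  by split=> x xs; rewrite mem_undup mem_cat xs ?orbT.
have sub xs ys : {subset xs <= V} -> {subset ys <= V} -> {subset xs ++ ys <= V}.
  by move=> xsV ysV x; rewrite mem_cat => /orP [/xsV|/ysV].
rewrite !(dlt_superset PV) //; try exact: sub.
have [|[Epq|]] := Tlt_total T_pd (Tmor_rank_set PV Dp pV) (Tmor_rank_set PV Dq qV); auto.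
right; left.
have [p_hom q_hom] := (hom_rank r_lin PV p_chain pV, hom_rank r_lin PV q_chain qV).
have map_nth_iota xs : map (nth 0 (map (rank r V) xs)) (iota 0 (size xs)) = map (rank r V) xs.
  by rewrite -[in iota _ _](size_map (rank r V) xs) -/(mkseq _ _) mkseq_nth.
have E1 : p.1 = q.1.
  move: (congr1 (Tsupp T (size V)) Epq).
  rewrite (Tsupp_mor T_pd p_hom Tp) (Tsupp_mor T_pd q_hom Tq) supp_p supp_q !map_nth_iota.
  by apply: (inj_in_map (rank_inj r_lin PV)); apply/allP.
rewrite E1 in Tp Epq; apply: injective_projections => //.
by apply: (Tmor_inj T_pd q_hom Tp Tq).
Qed.

Lemma dlt_linear : strict_linear D (dlt T r).
Proof. by split=> [p|]; [exact: dlt_irr|split; [exact: dlt_trans|exact: dlt_total]]. Qed.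

Lemma dltP d p q : D p -> D q ->
  (exists c f g, joint_emb r d p.1 q.1 c f g /\
     Tlt T (size c) (Tmor T (size c) f p.2) (Tmor T (size c) g q.2)) <-> dlt T r p q.
Proof.
move=> Dp Dq; case/DmemE: (Dp) => Pp p_chain _ _; case/DmemE: (Dq) => Pq q_chain _ _.
split=> [[c [f [g [J Tfg]]]]|pq]; last first.
  set c := undup (p.1 ++ q.1).
  exists c, (map (rank r c) p.1), (map (rank r c) q.1).
  by split; first exact: (joint_emb_undup r_lin d Pp Pq p_chain q_chain).
have [Ef Eg] := joint_emb_ranks r_lin Pp Pq p_chain q_chain J.
case: J => _ /In_union_mem_cat c_mem _ _ _.
have Pc : {in c, forall x, P x} by move=> x; rewrite c_mem mem_cat => /orP [/Pp|/Pq].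
by rewrite (dlt_superset Pc) // => [|x]; rewrite -?Ef -?Eg // c_mem.
Qed.

Lemma Dlt_joint_emb d p q : D p -> D q -> Dlt T r p q ->
  exists c f g, joint_emb r d p.1 q.1 c f g /\
    Tlt T (size c) (Tmor T (size c) f p.2) (Tmor T (size c) g q.2).
Proof.
move=> Dp Dq [c [f [g [c_chain [c_mem [f_emb [g_emb Tfg]]]]]]].
case/DmemE: (Dp) => Pp p_chain _ _; case/DmemE: (Dq) => Pq q_chain _ _.
have Pc : {in c, forall x, P x} by move=> x /InP /c_mem [] /InP; [apply: Pp|apply: Pq].
have emb_hom a h : {in a, forall x, P x} -> chain r a -> enum_emb h a c ->
    hom (size a) (size c) h.
  move=> Pa a_chain h_emb; apply/homP; split=> [|i j i_lt j_lt ij|i i_lt].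
  - by case: h_emb.
  - have [[hi_lt hi_a] [hj_lt hj_a]] := (enum_emb_nth d h_emb i_lt, enum_emb_nth d h_emb j_lt).
    apply/(chain_nth_ltP r_lin Pc c_chain d hi_lt hj_lt); rewrite hi_a hj_a.
    exact: (chain_nth_lt r_lin Pa a_chain).
  - exact: (enum_emb_nth d h_emb i_lt).1.
exists c, f, g; split=> //; split.
- by apply/NoDupP; apply: (chain_uniq r_lin Pc c_chain).
- exact: c_mem.
- exact: emb_hom.
- exact: emb_hom.
move=> i j i_lt j_lt; have [gj_lt <-] := enum_emb_nth d g_emb j_lt.
have [fi_lt <-] := enum_emb_nth d f_emb i_lt.
by split; apply: (chain_nth_ltP r_lin Pc c_chain).
Qed.

End DOrder.

Section TermOrder.
Variable T : pd_data.
Hypothesis T_pd : prae_dilator T.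

Local Notation lt := (th_ltT T).
Local Notation wf := (th_wf T).

Lemma th_wf_Dmem sg ss : wf (Th sg ss) <-> Dmem T wf lt (ss, sg).
Proof. by rewrite /= foldr_and_map. Qed.

Lemma th_ltT_intro sg ss tu ts c f g :
  joint_emb lt (Th sg ss) ss ts c f g ->
  Tlt T (size c) (Tmor T (size c) f sg) (Tmor T (size c) g tu) ->
  size ss = 0 \/ lt (last (Th sg ss) ss) (Th tu ts) -> lt (Th sg ss) (Th tu ts).
Proof. by case=> *; apply/th_ltT_unfold; left; exists c, f, g. Qed.

Lemma th_ltT_iff P sg ss tu ts : strict_linear P lt ->
  Dmem T P lt (ss, sg) -> Dmem T P lt (ts, tu) ->
  let s := Th sg ss in let t := Th tu ts in
  lt s t <-> (dlt T lt (ss, sg) (ts, tu) /\ (size ss = 0 \/ lt (last s ss) t)) \/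
             (0 < size ts /\ (s = last s ts \/ lt s (last s ts))).
Proof.
move=> P_lin Ds Dt s t; rewrite th_ltT_unfold /= -(dltP T_pd P_lin s Ds Dt) /=.
split=> [[[c [f [g [Dc [c_mem [f_hom [g_hom [fg [Tfg s_last]]]]]]]]]|]|
         [[[c [f [g [J Tfg]]]] s_last]|]]; try by right.
- by left; split=> //; exists c, f, g.
- by case: J => *; left; exists c, f, g.
Qed.

Definition wf_le N x := wf x /\ tsize x <= N.

Lemma wf_le_S N x : wf_le N x -> wf_le N.+1 x.
Proof. by case=> wf_x x_le; split=> //; apply: leqW. Qed.

Lemma wf_le_args N sg ss : wf_le N.+1 (Th sg ss) -> Dmem T (wf_le N) lt (ss, sg).
Proof.
case=> /th_wf_Dmem /DmemE [wf_ss ss_chain Tsg supp_sg] size_le; apply/DmemE; split=> //= x xs.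
by split; [apply: wf_ss|have := tsize_arg sg xs; lia].
Qed.

Lemma wf_le_arg N sg ss x : wf_le N.+1 (Th sg ss) -> x \in ss -> wf_le N.+1 x.
Proof. by move/wf_le_args/DmemE => [Pss _ _ _] /Pss /wf_le_S. Qed.

Section Step.
Variable N : nat.
Hypothesis lt_lin : strict_linear (wf_le N) lt.
Local Notation Q := (wf_le N.+1).

Lemma th_ltT_arg sg ss x : Q (Th sg ss) -> x \in ss -> lt x (Th sg ss).
Proof.
move=> Qs xs; have Ds := wf_le_args Qs; case/DmemE: (Ds) => Pss ss_chain _ _.
case: x xs => xg xss xs; have Dx := wf_le_args (wf_le_arg Qs xs).
apply/(th_ltT_iff lt_lin Dx Ds); right; split; first by case: (ss) xs.
exact: (chain_last lt_lin Pss ss_chain).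
Qed.

Lemma th_ltT_trans_le M r s t : Q r -> Q s -> Q t -> tsize r + tsize s + tsize t <= M ->
  lt r s -> lt s t -> lt r t.
Proof.
elim: M r s t => [|M IH] [rg rs] [sg ss] [tu ts] Qr Qs Qt size_le lt_rs lt_st.
  by have := tsize_gt0 (Th rg rs); lia.
have [Dr Ds Dt] := And3 (wf_le_args Qr) (wf_le_args Qs) (wf_le_args Qt).
have [[dlt_st st_last]|[ts_gt0 s_le]] := (th_ltT_iff lt_lin Ds Dt).1 lt_st; last first.
  apply/(th_ltT_iff lt_lin Dr Dt); right; split=> //; right.
  rewrite (last_dflt _ (Th rg rs) ts_gt0) in s_le; have l_in := last_in (Th rg rs) ts_gt0.
  case: s_le => [<- //|lt_sl]; apply: IH Qr Qs (wf_le_arg Qt l_in) _ lt_rs lt_sl.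
  by have := tsize_arg tu l_in; lia.
have [[dlt_rs rs_last]|[ss_gt0 r_le]] := (th_ltT_iff lt_lin Dr Ds).1 lt_rs.
  apply/(th_ltT_iff lt_lin Dr Dt); left; split.
    exact: (slin_trans (dlt_linear T_pd lt_lin) Dr Ds Dt dlt_rs dlt_st).
  have [->|rs_gt0] := posnP (size rs); [by left|right].
  case: rs_last => [rs0|lt_ls]; first by rewrite rs0 in rs_gt0.
  have l_in := last_in (Th rg rs) rs_gt0; apply: IH (wf_le_arg Qr l_in) Qs Qt _ lt_ls lt_st.
  by have := tsize_arg rg l_in; lia.
case: st_last => [ss0|lt_lt]; first by rewrite ss0 in ss_gt0.
rewrite (last_dflt _ (Th rg rs) ss_gt0) in lt_lt; have l_in := last_in (Th rg rs) ss_gt0.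
case: r_le => [-> //|lt_rl]; apply: IH Qr (wf_le_arg Qs l_in) Qt _ lt_rl lt_lt.
by have := tsize_arg sg l_in; lia.
Qed.

Lemma th_ltT_trans r s t : Q r -> Q s -> Q t -> lt r s -> lt s t -> lt r t.
Proof. by move=> Qr Qs Qt; apply: (th_ltT_trans_le Qr Qs Qt (leqnn _)). Qed.

Lemma th_ltT_irr x : Q x -> ~ lt x x.
Proof.
case: x => xg xs Qx; have Dx := wf_le_args Qx; case/DmemE: (Dx) => Pxs _ _ _.
case/(th_ltT_iff lt_lin Dx Dx) => [[/(dlt_irr T_pd lt_lin Dx) //]|[xs_gt0 x_le]].
have l_in := last_in (Th xg xs) xs_gt0.
case: x_le => [x_last|lt_xl].
  by have := tsize_arg xg l_in; rewrite -x_last ltnn.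
have := th_ltT_trans (wf_le_arg Qx l_in) Qx (wf_le_arg Qx l_in) (th_ltT_arg Qx l_in) lt_xl.
exact: (slin_irr lt_lin (Pxs _ l_in)).
Qed.

Lemma th_ltT_total_le M s t : Q s -> Q t -> tsize s + tsize t <= M -> lt s t \/ s = t \/ lt t s.
Proof.
elim: M s t => [|M IH] [sg ss] [tu ts] Qs Qt size_le.
  by have := tsize_gt0 (Th sg ss); lia.
(* Either s < t by clause (ii'), or the side condition of clause (i') for t < s holds. *)
have below_or_last xg xs yg ys : Q (Th xg xs) -> Q (Th yg ys) ->
    tsize (Th xg xs) + tsize (Th yg ys) <= M.+1 ->
    lt (Th xg xs) (Th yg ys) \/ size ys = 0 \/ lt (last (Th yg ys) ys) (Th xg xs).
  move=> Qx Qy xy_le; have [->|ys_gt0] := posnP (size ys); [by right; left|].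
  have l_in := last_in (Th yg ys) ys_gt0; set l := last _ ys in l_in *.
  have Dxy := th_ltT_iff lt_lin (wf_le_args Qx) (wf_le_args Qy).
  have xl_le : tsize (Th xg xs) + tsize l <= M by have := tsize_arg yg l_in; lia.
  have [lt_xl|[x_l|lt_lx]] := IH _ _ Qx (wf_le_arg Qy l_in) xl_le.
  - by left; apply/Dxy; right; rewrite (last_dflt _ (Th yg ys) ys_gt0); split=> //; right.
  - by left; apply/Dxy; right; rewrite (last_dflt _ (Th yg ys) ys_gt0); split=> //; left.
  - by right; right.
have [|ts_last] := below_or_last _ _ _ _ Qs Qt size_le; first by left.
have [|ss_last] := below_or_last _ _ _ _ Qt Qs ltac:(by rewrite addnC); first by right; right.
have [Ds Dt] := (wf_le_args Qs, wf_le_args Qt).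
have [dlt_st|[[-> ->]|dlt_ts]] := slin_total (dlt_linear T_pd lt_lin) Ds Dt.
- by left; apply/(th_ltT_iff lt_lin Ds Dt); left.
- by right; left.
- by right; right; apply/(th_ltT_iff lt_lin Dt Ds); left.
Qed.

Lemma th_ltT_linear_S : strict_linear Q lt.
Proof.
split; first exact: th_ltT_irr.
split; first exact: th_ltT_trans.
by move=> s t Qs Qt; apply: (th_ltT_total_le Qs Qt (leqnn _)).
Qed.

End Step.

Lemma th_ltT_linear_le N : strict_linear (wf_le N) lt.
Proof.
elim: N => [|N IH]; last exact: th_ltT_linear_S.
have wf_le0 x : ~ wf_le 0 x by case=> _; have := tsize_gt0 x; lia.
by split=> [x /wf_le0|]; last split=> [x y z /wf_le0|x y /wf_le0].
Qed.

Lemma th_ltT_linear : strict_linear wf lt.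
Proof.
have wf_le_size N x : wf x -> tsize x <= N -> wf_le N x by split.
split=> [x wf_x|]; first exact: (slin_irr (th_ltT_linear_le _) (wf_le_size _ _ wf_x (leqnn _))).
split=> [x y z wf_x wf_y wf_z|x y wf_x wf_y].
  apply: (slin_trans (th_ltT_linear_le (tsize x + tsize y + tsize z)));
    by apply: wf_le_size => //; lia.
by apply: (slin_total (th_ltT_linear_le (tsize x + tsize y))); apply: wf_le_size => //; lia.
Qed.

Lemma th_ltT_arg_wf sg ss x : wf (Th sg ss) -> x \in ss -> lt x (Th sg ss).
Proof.
move=> wf_s; apply: (th_ltT_arg (th_ltT_linear_le (tsize (Th sg ss)))).
by split=> //; apply: leqnSn.
Qed.

End TermOrder.

Theorem theorem4p3 (T : pd_data) :
  prae_dilator T -> BH_fixed_point T (th_wf T) (th_ltT T).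
Proof.
move=> T_pd; have lt_lin := th_ltT_linear T_pd; split=> //.
exists (fun p => Th p.2 p.1); split=> [[a s] /th_wf_Dmem //|[a s] [b t] Da Db /=].
split=> [Dab a_below|y /InP ya]; last by apply: (th_ltT_arg_wf T_pd) ya; apply/th_wf_Dmem.
have [c [f [g [J Tfg]]]] := Dlt_joint_emb lt_lin (Th s a) Da Db Dab.
apply: th_ltT_intro J Tfg _; have [->|a_gt0] := posnP (size a); [by left|right].
exact/a_below/InP/last_in.
Qed.
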